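(* Let $f:\{-1,1\}^n\to\{-1,1\}$ be computable by a parity decision tree of depth $d$. Then $$\sum_{i=1}^n\hat f(i)\le\sqrt{2d}.$$
   Context: $\hat f(i)=\mathbf{E}_x[f(x)x_i]$ over uniform $x\in\{-1,1\}^n$. A parity decision tree is a rooted full binary tree whose internal nodes are labelled by subsets $S\subseteq[n]$, whose two outgoing edges are labelled $-1$ and $1$, and whose leaves are labelled by values in $\{-1,1\}$; an input $x$ follows from a node labelled $S$ the edge labelled $\prod_{i\in S}x_i$. It computes $f$ if every input $x$ reaches a leaf labelled $f(x)$; its depth is the maximum number of internal nodes on a root-to-leaf path. *)

From mathcomp Require Import all_boot all_order all_algebra.
Set Implicit Arguments. Unset Strict Implicit. Unset Printing Implicit Defensive.
Import Order.TTheory GRing.Theory Num.Theory.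
Local Open Scope ring_scope.

(* Points of the hypercube {-1,1}^n are encoded as x : {ffun 'I_n -> bool};
   coordinate i has value (-1)^(x i), i.e. true ↦ -1, false ↦ 1. *)
Definition cube (n : nat) := {ffun 'I_n -> bool}.

Definition coord {R : nzRingType} {n : nat} (x : cube n) (i : 'I_n) : R :=
  (-1) ^+ x i.

Definition parity {R : nzRingType} {n : nat} (S : {set 'I_n}) (x : cube n) : R :=
  \prod_(i in S) coord x i.

Inductive pdt (R : Type) (n : nat) : Type :=
| PLeaf : R -> pdt R n
| PNode : {set 'I_n} -> pdt R n -> pdt R n -> pdt R n.
(* PNode S tm tp : tm = subtree along the edge labelled -1,
                   tp = subtree along the edge labelled  1. *)

Fixpoint pdt_wf {R : nzRingType} {n} (t : pdt R n) : Prop :=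
  match t with
  | PLeaf v => v = 1 \/ v = -1
  | PNode _ tm tp => pdt_wf tm /\ pdt_wf tp
  end.

Fixpoint pdt_eval {R : nzRingType} {n} (t : pdt R n) (x : cube n) : R :=
  match t with
  | PLeaf v => v
  | PNode T tm tp => if (parity T x : R) == -1 then pdt_eval tm x else pdt_eval tp x
  end.

Fixpoint pdt_depth {R : Type} {n} (t : pdt R n) : nat :=
  match t with
  | PLeaf _ => 0
  | PNode _ tm tp => (maxn (pdt_depth tm) (pdt_depth tp)).+1
  end.

Definition fourier1 {R : fieldType} {n} (f : cube n -> R) (i : 'I_n) : R :=
  (\sum_(x : cube n) f x * coord x i) / (#|{: cube n}|)%:R.

From Pilot Require Import Defs.
From mathcomp Require Import all_boot all_order all_algebra.
From mathcomp Require Import ring lra.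
Set Implicit Arguments. Unset Strict Implicit. Unset Printing Implicit Defensive.
Import Order.TTheory GRing.Theory Num.Theory.
Local Open Scope ring_scope.

(* The leaves of a parity decision tree of depth d partition the cube into
   affine subspaces of dimension at least n - d, and f is constant on each.
   With L x = \sum_i x_i and mu x the average of L over the leaf of x, we get
   \sum_i \hat f(i) = E[f L] = E[f mu] <= sqrt (E[mu^2]).
   On an affine subspace A, the non-constant coordinates fall into classes on
   which the products x_i x_j are constant, and a point of A is determined by
   one coordinate per class. So on A, L is a constant plus a combination
   \sum_r w_r x_r of pairwise orthogonal class representatives, whence
   Var_A(L) = \sum_r w_r^2 >= 2 #classes - n >= 2 dim A - n. Averaging over
   the leaves, E[mu^2] = E[L^2] - E[Var_leaf L] <= n - (2 (n - d) - n) = 2 d. *)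

(* [vector.v] also exports a [coord]. *)
Local Notation coord := Defs.coord.

Section Fibers.
Variables (R : numFieldType) (T : finType).

Definition avg (A : {set T}) (h : T -> R) : R := #|A|%:R^-1 * \sum_(y in A) h y.

Definition fiber (U : eqType) (p : T -> U) (x : T) : {set T} := [set y | p y == p x].

Lemma fiber_self (U : eqType) (p : T -> U) x : x \in fiber p x.
Proof. by rewrite inE. Qed.

Lemma sum_avg_fiber (U : eqType) (p : T -> U) (h : T -> R) :
  \sum_x avg (fiber p x) h = \sum_x h x.
Proof.
have fiberE x y : y \in fiber p x -> fiber p y = fiber p x.
  by rewrite inE => /eqP pyx; apply/setP => z; rewrite !inE pyx.
have card_fiber_neq0 x : #|fiber p x|%:R != 0 :> R.
  by rewrite pnatr_eq0 -lt0n; apply/card_gt0P; exists x; apply: fiber_self.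
rewrite /avg (eq_bigr (fun x => \sum_y (y \in fiber p x)%:R * (#|fiber p x|%:R^-1 * h y)));
  last first.
  move=> x _; rewrite mulr_sumr big_mkcond; apply: eq_bigr => y _.
  by case: ifP; rewrite ?mul1r ?mul0r.
rewrite exchange_big; apply: eq_bigr => y _.
transitivity (\sum_(x in fiber p y) #|fiber p y|%:R^-1 * h y).
  rewrite [RHS]big_mkcond; apply: eq_bigr => x _.
  have -> : (y \in fiber p x) = (x \in fiber p y) by rewrite !inE eq_sym.
  by case: ifP => [/fiberE -> | _]; rewrite ?mul1r ?mul0r.
by rewrite sumr_const -[_ *+ _]mulr_natl mulrA mulfV ?mul1r.
Qed.

Lemma avg_mul_const_in (A : {set T}) (g h : T -> R) c :
  {in A, forall y, g y = c} -> avg A (fun y => g y * h y) = c * avg A h.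
Proof.
move=> gA; rewrite /avg [RHS]mulrCA [c * _]mulr_sumr; congr (_ * _).
by apply: eq_bigr => y /gA->.
Qed.

End Fibers.

Section AffineSets.
Variable n : nat.
Implicit Types (A B : {set cube n}) (y z w : cube n) (g : cube n -> bool).

Definition xor3 y z w : cube n := [ffun i => y i (+) z i (+) w i].

Definition affine A := forall y z w, y \in A -> z \in A -> w \in A -> xor3 y z w \in A.

Definition xor3_linear g := forall y z w, g (xor3 y z w) = g y (+) g z (+) g w.

Lemma xor3K y z w : xor3 (xor3 y z w) z w = y.
Proof. by apply/ffunP => i; rewrite !ffunE; case: (y i); case: (z i); case: (w i). Qed.

Lemma xor3_inj z w : injective (fun y => xor3 y z w).
Proof. exact: (can_inj (g := fun y => xor3 y z w)) (fun y => xor3K y z w). Qed.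

Lemma affineT : affine [set: cube n].
Proof. by move=> *; rewrite inE. Qed.

Lemma affineI A B : affine A -> affine B -> affine (A :&: B).
Proof.
move=> affA affB y z w /setIP[yA yB] /setIP[zA zB] /setIP[wA wB].
by rewrite inE affA ?affB.
Qed.

Lemma affine_fiber g x : xor3_linear g -> affine (fiber g x).
Proof.
move=> lin_g y z w; rewrite !inE lin_g => /eqP-> /eqP-> /eqP->.
by rewrite addbb addFb.
Qed.

(* [y |-> xor3 y z w] is an involution of A that flips g whenever g z != g w. *)
Lemma card_fiber_half A g x :
  affine A -> xor3_linear g -> x \in A -> (#|A| <= 2 * #|A :&: fiber g x|)%N.
Proof.
move=> affA lin_g xA; rewrite -(cardsID (fiber g x) A) mul2n -addnn leq_add2l.
have [->|[b /setDP[bA bF]]] := set_0Vmem (A :\: fiber g x); first by rewrite cards0.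
rewrite -(card_imset _ (xor3_inj (z := x) (w := b))); apply: subset_leq_card.
apply/subsetP => _ /imsetP[y /setDP[yA yF] ->]; rewrite !inE affA //= lin_g.
by move: bF yF; rewrite !inE; case: (g x); case: (g y); case: (g b).
Qed.

Lemma sum_sign_affine {R : numDomainType} A g z w :
  affine A -> xor3_linear g -> z \in A -> w \in A -> g z != g w ->
  \sum_(y in A) (-1) ^+ g y = 0 :> R.
Proof.
move=> affA lin_g zA wA gzw; set S := \sum_(y in A) _.
have SN : S = - S.
  rewrite {1}/S (reindex_inj (xor3_inj (z := z) (w := w))) /= -sumrN; apply: eq_big => [y|y _].
    apply/idP/idP => [|yA]; last exact: affA.
    by rewrite -{2}(xor3K y z w) => ?; apply: affA.
  rewrite lin_g -addbA.
  have -> : g z (+) g w by move: gzw; case: (g z); case: (g w).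
  by rewrite signr_addb expr1 mulrN1.
have : S *+ 2 == 0 by rewrite mulr2n {1}SN addNr.
by rewrite mulrn_eq0 => /eqP.
Qed.

End AffineSets.

Lemma sqr_1Dt_ge (R : realDomainType) (t : R) (u : nat) :
  `|t| <= u%:R -> 1 - u%:R <= (1 + t) ^+ 2.
Proof.
case: u => [|u] t_le; last by apply: le_trans (sqr_ge0 _); rewrite subr_le0 ler1n.
have /eqP-> : t == 0 by rewrite -normr_le0.
by rewrite subr0 addr0 expr1n.
Qed.

Definition coord_sum {R : nzRingType} {n} (y : cube n) : R := \sum_(i < n) coord y i.

Lemma coordM_same {R : nzRingType} n (y : cube n) i : coord y i * coord y i = 1 :> R.
Proof. by rewrite /Defs.coord -signr_addb addbb. Qed.

Section Coupling.
Variables (n : nat) (A : {set cube n}) (a : cube n).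
Hypotheses (affA : affine A) (aA : a \in A).
Implicit Types (i j r : 'I_n) (y : cube n).

Definition frozen i := [forall y in A, y i == a i].

Definition coupled i j := [forall y in A, y i (+) y j == a i (+) a j].

Definition reps : {set 'I_n} :=
  [set r | ~~ frozen r & [forall j : 'I_n, (j < r)%N ==> ~~ coupled j r]].

Lemma coupled_refl i : coupled i i.
Proof. by apply/forall_inP => y _; rewrite !addbb. Qed.

Lemma coupled_sym i j : coupled i j = coupled j i.
Proof. by apply: eq_forallb_in => y _; rewrite addbC [a i (+) _]addbC. Qed.

Lemma coupled_trans j i k : coupled i j -> coupled j k -> coupled i k.
Proof.
have addb_chain u v w : u (+) w = (u (+) v) (+) (v (+) w) by case: u; case: v; case: w.
move=> /forall_inP cij /forall_inP cjk; apply/forall_inP => y yA.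
by rewrite (addb_chain _ (y j)) (addb_chain (a i) (a j)) (eqP (cij y yA)) (eqP (cjk y yA)).
Qed.

Lemma coupled_frozen i j : frozen i -> coupled i j = frozen j.
Proof.
move=> /forall_inP fi; apply: eq_forallb_in => y yA.
by rewrite (eqP (fi y yA)); case: (a i); case: (a j); case: (y j).
Qed.

Lemma rep_exists i : ~~ frozen i -> exists2 r, r \in reps & coupled i r.
Proof.
move=> nfi; have [r cri min_r] := @arg_minnP _ i (coupled^~ i) val (coupled_refl i).
exists r; last by rewrite coupled_sym.
rewrite inE; apply/andP; split; first by apply: contra nfi => fr; rewrite -(coupled_frozen i fr).
apply/forallP => j; apply/implyP => ltjr; apply/negP => cjr.
by have := min_r j (coupled_trans cjr cri); rewrite leqNgt ltjr.
Qed.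

Lemma reps_coupled_eq r r' : r \in reps -> r' \in reps -> coupled r r' -> r = r'.
Proof.
rewrite !inE => /andP[_ /forallP min_r] /andP[_ /forallP min_r'] crr'.
case: (ltngtP r r') => [lt|lt|eq]; last exact: val_inj.
  by move: (min_r' r); rewrite lt crr'.
by move: (min_r r'); rewrite lt coupled_sym crr'.
Qed.

Lemma reps_coupled_uniq i r r' :
  r \in reps -> r' \in reps -> coupled i r -> coupled i r' -> r = r'.
Proof.
move=> rR r'R cir cir'; apply: reps_coupled_eq => //.
by apply: (coupled_trans (j := i)); rewrite // coupled_sym.
Qed.

Lemma reps_frozenN r : r \in reps -> ~~ frozen r.
Proof. by rewrite inE => /andP[]. Qed.

(* A point of A is determined by its coordinates at the representatives. *)
Lemma card_reps : (#|A| <= 2 ^ #|reps|)%N.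
Proof.
pose trace y := reps :&: [set r | y r].
have trace_inj : {in A &, injective trace}.
  move=> y z yA zA /setP eq_yz; apply/ffunP => i.
  case: (boolP (frozen i)) => [/forall_inP fi | nfi].
    by rewrite (eqP (fi y yA)) (eqP (fi z zA)).
  have [r rR /forall_inP cir] := rep_exists nfi.
  have := eq_yz r; rewrite !in_setI rR !in_set /= => eq_r.
  by apply: (@addIb (y r)); rewrite {2}eq_r (eqP (cir y yA)) (eqP (cir z zA)).
rewrite -(card_in_imset trace_inj) -card_powerset; apply: subset_leq_card.
by apply/subsetP => _ /imsetP[y _ ->]; rewrite powersetE subsetIl.
Qed.

Section SignDecomposition.
Context {R : numDomainType}.

Definition csign i j : R := (-1) ^+ (a i (+) a j).

Definition frozen_part : R := \sum_i (frozen i)%:R * coord a i.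

Definition class_weight r : R := \sum_i (coupled i r)%:R * csign i r.

Definition free_part y : R := \sum_(r in reps) class_weight r * coord y r.

Lemma coord_frozen i y : frozen i -> y \in A -> coord y i = coord a i :> R.
Proof. by move=> /forall_inP fi yA; rewrite /coord (eqP (fi y yA)). Qed.

Lemma coord_coupled i j y : coupled i j -> y \in A -> coord y i = csign i j * coord y j.
Proof.
move=> /forall_inP cij yA; rewrite /coord /csign -(eqP (cij y yA)) -signr_addb.
by rewrite -addbA addbb addbF.
Qed.

Lemma coord_decomp i y : y \in A ->
  coord y i = (frozen i)%:R * coord a i + \sum_(r in reps) (coupled i r)%:R * csign i r * coord y r.
Proof.
move=> yA; case: (boolP (frozen i)) => [fi | nfi].
  rewrite big1 ?addr0 ?mul1r ?coord_frozen // => r rR.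
  by rewrite coupled_frozen // (negPf (reps_frozenN rR)) !mul0r.
have [r0 r0R cir0] := rep_exists nfi.
rewrite mul0r add0r (bigD1 r0) //= big1 ?addr0 => [|r /andP[rR rr0]].
  by rewrite cir0 mul1r (coord_coupled cir0).
rewrite [coupled i r](contraNF _ rr0) ?mul0r // => cir; apply/eqP.
exact: reps_coupled_uniq cir cir0.
Qed.

Lemma coord_sum_decomp y : y \in A -> coord_sum y = frozen_part + free_part y.
Proof.
move=> yA; rewrite /coord_sum (eq_bigr _ (fun i _ => coord_decomp i yA)) big_split /=.
congr (_ + _); rewrite exchange_big; apply: eq_bigr => r _.
by rewrite /class_weight mulr_suml.
Qed.

Lemma sum_coord_frozenN i : ~~ frozen i -> \sum_(y in A) coord y i = 0 :> R.
Proof.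
case/forall_inPn => b bA nfb.
apply: (sum_sign_affine (g := fun y => y i) affA _ bA aA nfb).
by move=> y z w; rewrite ffunE.
Qed.

Lemma sum_coordM_coupledN i j : ~~ coupled i j ->
  \sum_(y in A) coord y i * coord y j = 0 :> R.
Proof.
case/forall_inPn => b bA ncb.
rewrite (eq_bigr (fun y => (-1) ^+ (y i (+) y j))) => [|y _]; last first.
  by rewrite /Defs.coord signr_addb.
apply: (sum_sign_affine (g := fun y => y i (+) y j) affA _ bA aA ncb).
move=> y z w; rewrite !ffunE.
by case: (y i); case: (y j); case: (z i); case: (z j); case: (w i); case: (w j).
Qed.

Lemma sum_coordM_reps r r' : r \in reps -> r' \in reps ->
  \sum_(y in A) coord y r * coord y r' = (r == r')%:R * #|A|%:R :> R.
Proof.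
move=> rR r'R; have [<-|neq] := eqVneq r r'.
  by rewrite mul1r -sumr_const; apply: eq_bigr => y _; apply: coordM_same.
rewrite mul0r sum_coordM_coupledN //.
by apply: contra neq => /reps_coupled_eq->.
Qed.

Lemma sum_free_part : \sum_(y in A) free_part y = 0.
Proof.
rewrite exchange_big big1 // => r rR; rewrite -mulr_sumr.
by rewrite sum_coord_frozenN ?mulr0 ?reps_frozenN.
Qed.

Lemma sum_free_part_sq :
  \sum_(y in A) free_part y ^+ 2 = #|A|%:R * \sum_(r in reps) class_weight r ^+ 2.
Proof.
rewrite mulr_sumr (eq_bigr (fun y => \sum_(r in reps) \sum_(r' in reps)
    class_weight r * class_weight r' * (coord y r * coord y r'))); last first.
  move=> y _; rewrite expr2 mulr_suml; apply: eq_bigr => r _.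
  by rewrite mulr_sumr; apply: eq_bigr => r' _; rewrite mulrACA.
rewrite exchange_big; apply: eq_bigr => r rR; rewrite exchange_big /=.
rewrite (eq_bigr (fun r' => class_weight r * class_weight r' * ((r == r')%:R * #|A|%:R)));
  last by move=> r' r'R; rewrite -mulr_sumr sum_coordM_reps.
rewrite (bigD1 r) //= eqxx big1 ?addr0; first by rewrite mul1r expr2 mulrC.
by move=> r' /andP[_ r'r]; rewrite eq_sym (negPf r'r) mul0r mulr0.
Qed.

Lemma sum_coord_sum : \sum_(y in A) coord_sum y = #|A|%:R * frozen_part.
Proof.
rewrite (eq_bigr _ (fun y => coord_sum_decomp (y := y))) big_split /= sum_free_part.
by rewrite sumr_const addr0 mulr_natl.
Qed.

Lemma sum_coord_sum_sq : \sum_(y in A) coord_sum y ^+ 2 =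
  #|A|%:R * (frozen_part ^+ 2 + \sum_(r in reps) class_weight r ^+ 2).
Proof.
rewrite (eq_bigr _ (fun y yA => congr1 (fun v => v ^+ 2) (coord_sum_decomp yA))).
under eq_bigr do rewrite sqrrD.
rewrite !big_split /= sumr_const -mulr_sumr sum_free_part sum_free_part_sq.
by rewrite mulr0 !addr0 mulrDr !mulr_natl.
Qed.

End SignDecomposition.

Section Variance.
Context {R : realFieldType}.

Lemma class_weight_sq_ge r : 2 - \sum_i (coupled i r)%:R <= class_weight r ^+ 2 :> R.
Proof.
rewrite /class_weight [in X in _ <= X](bigD1 r) // [in X in X <= _](bigD1 r) //=.
rewrite coupled_refl /csign addbb expr0 mul1r.
apply: le_trans (sqr_1Dt_ge (u := \sum_(i < n | i != r) coupled i r) _).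
  by rewrite natr_sum (_ : true%:R = 1 :> R) //; lra.
rewrite natr_sum; apply: le_trans (ler_norm_sum _ _ _) _; apply: ler_sum => i _.
by rewrite normrM normr_sign mulr1 normr_nat.
Qed.

Lemma sum_coupled_reps_le1 i : \sum_(r in reps) (coupled i r)%:R <= 1 :> R.
Proof.
case: (boolP (frozen i)) => [fi | /rep_exists[r0 r0R cir0]].
  by rewrite big1 ?ler01 // => r /reps_frozenN; rewrite coupled_frozen // => /negPf->.
rewrite (bigD1 r0) //= cir0 big1 ?addr0 // => r /andP[rR rr0].
rewrite [coupled i r](contraNF _ rr0) // => cir; apply/eqP.
exact: reps_coupled_uniq cir cir0.
Qed.

Lemma sum_class_weight_sq_ge :
  2 * #|reps|%:R - n%:R <= \sum_(r in reps) class_weight r ^+ 2 :> R.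
Proof.
apply: le_trans (ler_sum _ (fun r _ => class_weight_sq_ge r)).
rewrite sumrB sumr_const exchange_big /=; apply: lerB; first by rewrite mulr_natr.
apply: le_trans (ler_sum _ (fun i _ => sum_coupled_reps_le1 i)) _.
by rewrite sumr_const card_ord.
Qed.

Lemma variance_coord_sum_ge m : (2 ^ m <= #|A|)%N ->
  avg A coord_sum ^+ 2 <= avg A (fun y => coord_sum y ^+ 2) - (2 * m%:R - n%:R) :> R.
Proof.
move=> card_A; have A_neq0 : #|A|%:R != 0 :> R.
  by rewrite pnatr_eq0 -lt0n; apply/card_gt0P; exists a.
rewrite /avg sum_coord_sum sum_coord_sum_sq !mulKf // -addrA lerDl subr_ge0.
apply: le_trans sum_class_weight_sq_ge; rewrite lerD2r ler_pM2l ?ler_nat //.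
by rewrite -(leq_exp2l _ _ (ltnSn 1)) (leq_trans card_A) ?card_reps.
Qed.

End Variance.

End Coupling.

Section Trees.
Variable n : nat.
Implicit Types (Q : {set 'I_n}) (x y : cube n).

Definition parity_bit Q x : bool := \big[addb/false]_(i in Q) x i.

Lemma parity_bitE (R : nzRingType) Q x : parity Q x = (-1) ^+ parity_bit Q x :> R.
Proof. by rewrite (big_morph _ (@signr_addb R) (expr0 (-1) : (-1) ^+ false = 1 :> R)). Qed.

Lemma parity_eqN1 (R : numDomainType) Q x : (parity Q x == -1 :> R) = parity_bit Q x.
Proof.
rewrite parity_bitE; case: (parity_bit Q x); first by rewrite eqxx.
by rewrite expr0 -addr_eq0 -mulr2n mulrn_eq0 oner_eq0.
Qed.

Lemma xor3_linear_parity_bit Q : xor3_linear (parity_bit Q).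
Proof. by move=> y z w; rewrite /parity_bit -!big_split; apply: eq_bigr => i _; rewrite ffunE. Qed.

Fixpoint pdt_path {R : Type} (t : pdt R n) x : seq bool :=
  match t with
  | PLeaf _ => [::]
  | PNode Q tm tp => parity_bit Q x :: pdt_path (if parity_bit Q x then tm else tp) x
  end.

Definition leafset {R : Type} (t : pdt R n) x : {set cube n} := fiber (pdt_path t) x.

Lemma pdt_eval_path (R : numDomainType) (t : pdt R n) x y :
  pdt_path t y = pdt_path t x -> pdt_eval t y = pdt_eval t x.
Proof.
elim: t => [v|Q tm IHm tp IHp] //= [eq_bit eq_path].
by move: eq_path; rewrite !parity_eqN1 eq_bit; case: (parity_bit Q x); [apply: IHm | apply: IHp].
Qed.

Lemma leafset_node {R : Type} Q (tm tp : pdt R n) x :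
  leafset (PNode Q tm tp) x =
  fiber (parity_bit Q) x :&: leafset (if parity_bit Q x then tm else tp) x.
Proof. by apply/setP => y; rewrite !inE eqseq_cons; case: eqP => //= ->. Qed.

Lemma affine_leafset {R : Type} (t : pdt R n) x : affine (leafset t x).
Proof.
elim: t => [v|Q tm IHm tp IHp]; first by move=> *; rewrite inE.
rewrite leafset_node; apply: affineI; first exact/affine_fiber/xor3_linear_parity_bit.
by case: ifP.
Qed.

(* Each query at most halves an affine set containing x. *)
Lemma card_leafset {R : Type} (t : pdt R n) A x : affine A -> x \in A ->
  (#|A| <= 2 ^ pdt_depth t * #|A :&: leafset t x|)%N.
Proof.
elim: t A => [v|Q tm IHm tp IHp] A affA xA /=.
  by rewrite mul1n subset_leq_card //; apply/subsetP => y yA; rewrite !inE yA.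
rewrite leafset_node setIA; set B := A :&: _.
have affB : affine B by apply/affineI/affine_fiber/xor3_linear_parity_bit.
have xB : x \in B by rewrite !inE xA eqxx.
apply: leq_trans (card_fiber_half affA (xor3_linear_parity_bit Q) xA) _.
rewrite expnS -mulnA leq_pmul2l //.
case: ifP => _; [apply: leq_trans (IHm B affB xB) _ | apply: leq_trans (IHp B affB xB) _].
  by rewrite leq_mul2r leq_pexp2l ?leq_maxl ?orbT.
by rewrite leq_mul2r leq_pexp2l ?leq_maxr ?orbT.
Qed.

End Trees.

Lemma card_cube n : #|{: cube n}| = (2 ^ n)%N.
Proof. by rewrite card_ffun card_bool card_ord. Qed.

Lemma sum_coordM_cube {R : numDomainType} n (i j : 'I_n) :
  \sum_(x : cube n) coord x i * coord x j = (i == j)%:R * #|{: cube n}|%:R :> R.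
Proof.
have [<-|neq_ij] := eqVneq i j.
  by rewrite mul1r -sumr_const; apply: eq_bigr => x _; apply: coordM_same.
rewrite mul0r (eq_bigl (fun x => x \in [set: cube n])) => [|x]; last by rewrite inE.
apply: (sum_coordM_coupledN (@affineT n) (in_setT [ffun => false])).
apply/forall_inPn; exists [ffun k => k == i]; rewrite ?inE //.
by rewrite !ffunE eqxx (eq_sym j) (negPf neq_ij).
Qed.

Lemma sum_coord_sum_sq_cube {R : numDomainType} n :
  \sum_(x : cube n) coord_sum x ^+ 2 = #|{: cube n}|%:R * n%:R :> R.
Proof.
under eq_bigr do rewrite /coord_sum expr2 mulr_suml.
rewrite exchange_big (eq_bigr (fun _ => #|{: cube n}|%:R)) => [|i _].
  by rewrite sumr_const card_ord mulr_natr.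
under eq_bigr do rewrite mulr_sumr.
rewrite exchange_big /= (bigD1 i) //= sum_coordM_cube eqxx mul1r big1 ?addr0 // => j neq_ji.
by rewrite sum_coordM_cube eq_sym (negPf neq_ji) mul0r.
Qed.

Lemma sum_fourier1 {R : fieldType} n (f : cube n -> R) :
  \sum_i fourier1 f i = (\sum_x f x * coord_sum x) / #|{: cube n}|%:R.
Proof.
rewrite /fourier1 -mulr_suml exchange_big; congr (_ * _).
by apply: eq_bigr => x _; rewrite mulr_sumr.
Qed.

Lemma exp2_subn_le d n k : (2 ^ n <= 2 ^ d * k)%N -> (0 < k)%N -> (2 ^ (n - d) <= k)%N.
Proof.
case: (leqP d n) => [le_dn | /ltnW/eqP le_nd] card_k k_gt0; last by rewrite le_nd.
by rewrite -(leq_pmul2l (expn_gt0 2 d)) -expnD subnKC.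
Qed.

Lemma sum_sqr_avg_leafset {R : realFieldType} {V : Type} n (t : pdt V n) :
  \sum_x avg (leafset t x) coord_sum ^+ 2 <= #|{: cube n}|%:R * (2 * (pdt_depth t)%:R) :> R.
Proof.
set d := pdt_depth t; set N := #|{: cube n}|%:R.
have leaf_var x : avg (leafset t x) coord_sum ^+ 2 <=
    avg (leafset t x) (fun y => coord_sum y ^+ 2) - (2 * (n - d)%:R - n%:R) :> R.
  apply: (variance_coord_sum_ge (affine_leafset (t := t) (x := x)) (fiber_self _ x)).
  apply: exp2_subn_le; last by apply/card_gt0P; exists x; apply: fiber_self.
  by have := card_leafset t (@affineT n) (in_setT x); rewrite setTI cardsT card_cube.
apply: le_trans (ler_sum _ (fun x _ => leaf_var x)) _.
rewrite sumrB (sum_avg_fiber (pdt_path t)) sum_coord_sum_sq_cube sumr_const.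
rewrite -[X in _ - X <= _]mulr_natl -/N -mulrBr ler_wpM2l ?ler0n //.
have : (n <= d + (n - d))%N by rewrite -leq_subLR.
by rewrite -(ler_nat R) natrD => ?; lra.
Qed.

Lemma sum_mul_le_sqrt {R : rcfType} (I : finType) (f u : I -> R) (c : R) :
  (forall i, f i ^+ 2 <= 1) -> \sum_i u i ^+ 2 <= #|I|%:R * c ->
  \sum_i f i * u i <= #|I|%:R * Num.sqrt c.
Proof.
move=> f_le1 sum_u; have [c_le0 | c_gt0] := lerP c 0.
  have sum_u_le0 : \sum_i u i ^+ 2 <= 0.
    by apply: le_trans sum_u _; rewrite mulr_ge0_le0 ?ler0n.
  have u0 i : u i = 0.
    apply/eqP; rewrite -sqrf_eq0 eq_le sqr_ge0 andbT; apply: le_trans sum_u_le0.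
    by rewrite (bigD1 i) //= lerDl sumr_ge0 // => *; apply: sqr_ge0.
  by rewrite big1 => [|i _]; rewrite ?u0 ?mulr0 // ?mulr_ge0 ?sqrtr_ge0.
set s := Num.sqrt c; have s_gt0 : 0 < s by rewrite sqrtr_gt0.
have s2 : s ^+ 2 = c by rewrite sqr_sqrtr ?ltW.
(* AM-GM termwise: [2 s f u <= u^2 + s^2 f^2 <= u^2 + c] *)
have amgm i : 2 * s * (f i * u i) <= u i ^+ 2 + c.
  have := sqr_ge0 (u i - s * f i); have := f_le1 i; rewrite -s2; nra.
have two_s_gt0 : 0 < 2 * s by rewrite mulr_gt0.
suff : 2 * s * \sum_i f i * u i <= 2 * s * (#|I|%:R * s) by rewrite ler_pM2l.
rewrite mulr_sumr.
apply: le_trans (ler_sum _ (fun i _ => amgm i)) _.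
rewrite big_split /= sumr_const; apply: le_trans (lerD sum_u (lexx _)) _.
by rewrite -mulr_natl -s2 le_eqVlt; apply/orP; left; apply/eqP; ring.
Qed.

Theorem theorem3 (R : rcfType) (n d : nat) (f : cube n -> R)
  (hf : forall x, f x = 1 \/ f x = -1)
  (t : pdt R n) (hwf : pdt_wf t) (hdepth : pdt_depth t = d)
  (hcomp : forall x, pdt_eval t x = f x) :
  \sum_(i < n) fourier1 f i <= Num.sqrt (2 * d%:R).
Proof.
have f_leafset x : {in leafset t x, forall y, f y = f x}.
  by move=> y; rewrite inE -!hcomp => /eqP/pdt_eval_path.
have f_sq_le1 x : f x ^+ 2 <= 1 by case: (hf x) => ->; rewrite ?expr1n ?sqrrN ?expr1n.
have card_gt0 : 0 < #|{: cube n}|%:R :> R by rewrite ltr0n card_cube expn_gt0.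
rewrite sum_fourier1 ler_pdivrMr // mulrC -(sum_avg_fiber (pdt_path t)).
under eq_bigr do rewrite (avg_mul_const_in _ (f_leafset _)).
apply: sum_mul_le_sqrt => //; rewrite -hdepth.
exact: sum_sqr_avg_leafset.
Qed.
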